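(* Let $S$ be a semigroup, $I, J$ sets and $P$ a $J\times I$ matrix, and let $M$ be either $M(S; I, J; P)$ (entries of $P$ in $S$) or $M^0(S; I, J; P)$ (entries of $P$ in $S \cup \{0\}$), and suppose $M$ is finitely generated. Choose $i \in I$ and $j \in J$ with $P_{ji} \neq 0$ such that for every $j' \in J$ we have $P_{j'i} = 0$ or $S P_{j'i} \subseteq S P_{ji}$, and let $T = \{(i, s, j) : s \in S\} \subseteq M$. Let $\sigma : X^+ \to T$ and $\tau : Y^+ \to M$ be choices of generators such that $X \subseteq Y$ and $\sigma$ is the restriction of $\tau$ to $X^+$. Then $L_\sigma(T) = L_\tau(M) \cap \hat{X}^*$.
   Context: The Rees matrix semigroup with zero $M^0(S; I, J; P)$ (where $0 \notin S$) has elements $(I \times S \times J) \cup \{0\}$, $0$ is a zero, and $(i_1, g_1, j_1)(i_2, g_2, j_2) = (i_1, g_1 P_{j_1 i_2} g_2, j_2)$ if $P_{j_1 i_2} \in S$ and $=0$ if $P_{j_1 i_2} = 0$. If $P$ has no zero entries, $M(S;I,J;P)$ is the subsemigroup $I \times S \times J$. For a semigroup $S$, $S^1$ denotes the monoid obtained by adjoining a new identity $1$ (even if $S$ already has one). A choice of generators for $S$ is a surjective morphism $\sigma : X^+ \to S$ from a free semigroup; it extends uniquely to $\sigma^1 : X^* \to S^1$. Let $\overline{X} = \{\overline{x} : x \in X\}$ be a set of formal inverses, $\hat{X} = X \cup \overline{X}$. The loop automaton of $S$ with respect to $\sigma$ is the directed labelled graph with vertex set $S^1$, having for each $a \in S^1$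 and $x \in X$ an edge from $a$ to $a(x\sigma)$ labelled $x$ and an edge from $a(x\sigma)$ to $a$ labelled $\overline{x}$. The loop problem $L_\sigma(S) \subseteq \hat{X}^*$ is the set of words labelling paths from $1$ to $1$ in this graph (including the empty word). *)

From Stdlib Require Import List.
Import ListNotations.
Set Implicit Arguments.

Definition associative_op {A : Type} (mul : A -> A -> A) : Prop :=
  forall a b c, mul a (mul b c) = mul (mul a b) c.

(** Value under a choice of generators [gen : X -> A] of the nonempty word
    [x :: w] in [X^+]  (i.e. the unique morphism X^+ -> A extending gen). *)
Definition eval_word {A X : Type} (mul : A -> A -> A) (gen : X -> A)
  (x : X) (w : list X) : A :=
  fold_left (fun a y => mul a (gen y)) w (gen x).

Definition generators_of {A X : Type} (mul : A -> A -> A) (V : A -> Prop)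
  (gen : X -> A) : Prop :=
  (forall x, V (gen x)) /\
  (forall a, V a -> exists x w, eval_word mul gen x w = a).

Definition finitely_generated {A : Type} (mul : A -> A -> A) : Prop :=
  exists l : list A, forall a : A, exists x w,
    In x l /\ Forall (fun y => In y l) w /\ eval_word mul (fun z => z) x w = a.

(** Letters of X^ = X ∪ X̄ : [inl x] is x, [inr x] is the formal inverse x̄. *)
Definition hat (X : Type) := (X + X)%type.

(** Right multiplication in V^1 = V ∪ {1}, with [None] the adjoined identity. *)
Definition mul1 {A : Type} (mul : A -> A -> A) (a : option A) (b : A) : A :=
  match a with None => b | Some a' => mul a' b end.

Definition vert {A : Type} (V : A -> Prop) (u : option A) : Prop :=
  match u with None => True | Some a => V a end.

(** Paths in the loop automaton of the subsemigroup [V] (closed under [mul])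
    of [A] w.r.t. [gen : X -> V]: vertex set V^1 (encoded as [option A] with
    vertices restricted to [V]); for each vertex a and x in X there is an edge
    a --x--> a(x gen) and an edge a(x gen) --x̄--> a. *)
Inductive lpath {A X : Type} (mul : A -> A -> A) (V : A -> Prop) (gen : X -> A)
  : option A -> list (hat X) -> option A -> Prop :=
| lp_nil u : vert V u -> lpath mul V gen u [] u
| lp_fwd a x w v : vert V a -> V (mul1 mul a (gen x)) ->
    lpath mul V gen (Some (mul1 mul a (gen x))) w v ->
    lpath mul V gen a (inl x :: w) v
| lp_bwd a x w v : vert V a -> V (mul1 mul a (gen x)) ->
    lpath mul V gen a w v ->
    lpath mul V gen (Some (mul1 mul a (gen x))) (inr x :: w) v.

Definition loop_problem {A X : Type} (mul : A -> A -> A) (V : A -> Prop)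
  (gen : X -> A) (w : list (hat X)) : Prop :=
  lpath mul V gen None w None.

Definition hat_map {X Y : Type} (f : X -> Y) (w : list (hat X)) : list (hat Y) :=
  map (fun l => match l with inl x => inl (f x) | inr x => inr (f x) end) w.

(** M^0(S; I, J; P), P : J -> I -> S ∪ {0} (None = 0); element 0 is [None]. *)
Definition rees0_mul {S I J : Type} (mulS : S -> S -> S) (P : J -> I -> option S)
  (a b : option (I * S * J)) : option (I * S * J) :=
  match a, b with
  | Some (i1, g1, j1), Some (i2, g2, j2) =>
      match P j1 i2 with
      | Some p => Some (i1, mulS (mulS g1 p) g2, j2)
      | None => None
      end
  | _, _ => None
  end.

Definition rees_mul {S I J : Type} (mulS : S -> S -> S) (P : J -> I -> S)
  (a b : I * S * J) : I * S * J :=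
  match a, b with
  | (i1, g1, j1), (i2, g2, j2) => (i1, mulS (mulS g1 (P j1 i2)) g2, j2)
  end.

Definition left_mult_sub {S : Type} (mulS : S -> S -> S) (p' p : S) : Prop :=
  forall s : S, exists t : S, mulS s p' = mulS t p.

(* A path of the loop automaton of M from 1 to 1 labelled by generators of T
   may leave T^1 only through backward edges ending at some (i, t, j') with
   j' <> j.  Such a vertex can be left only by a forward edge, and by the
   hypothesis S P_{j'i} ⊆ S P_{ji} it acts on T exactly like some (i, t', j)
   of T; replacing it by (i, t', j) yields a path of the loop automaton of T
   with the same label. *)

From Stdlib Require Import List Classical.

Lemma vert_mono {A : Type} {V V' : A -> Prop} {u} :
  (forall a, V a -> V' a) -> vert V u -> vert V' u.
Proof. destruct u; simpl; auto. Qed.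

Lemma lpath_mono {A X : Type} {mul : A -> A -> A} {V V' : A -> Prop}
  {gen : X -> A} {u w v} :
  (forall a, V a -> V' a) -> lpath mul V gen u w v -> lpath mul V' gen u w v.
Proof.
  intros HV H; induction H.
  - apply lp_nil; exact (vert_mono HV H).
  - apply lp_fwd; auto; exact (vert_mono HV H).
  - apply lp_bwd; auto; exact (vert_mono HV H).
Qed.

Lemma lpath_hat_map {A X Y : Type} (mul : A -> A -> A) (V : A -> Prop)
  (f : X -> Y) (gen : Y -> A) w : forall u v,
  lpath mul V gen u (hat_map f w) v <-> lpath mul V (fun x => gen (f x)) u w v.
Proof.
  induction w as [|[x|x] w IH]; intros u v; split; intro H;
    inversion H; subst.
  all: first [ apply lp_nil | apply lp_fwd | apply lp_bwd
             | apply (lp_bwd (gen := fun y => gen (f y))) ];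
    try assumption; apply IH; assumption.
Qed.

Section SubsemigroupLoops.

Context {A X : Type} (mul : A -> A -> A) (T : A -> Prop) (gen : X -> A).

Hypothesis gen_T : forall x, T (gen x).
Hypothesis T_mul_closed : forall {a b}, T a -> T b -> T (mul a b).
Hypothesis T_mul_right_unitary :
  forall {a t t'}, T t -> T t' -> T (mul (mul a t) t') -> T (mul a t).

Definition acts_on_T_like (a b : A) : Prop := forall t, T t -> mul a t = mul b t.

Hypothesis acts_on_T_like_T :
  forall {a t}, T t -> T (mul a t) -> exists b, T b /\ acts_on_T_like a b.

(* A vertex outside T^1 that acts on T like [u] is never of the form
   [a (gen x)] (by right unitarity), so a path can only leave it forwards. *)
Definition shadowed (v u : option A) : Prop :=
  vert T u /\
  (v = u \/ exists a b, v = Some a /\ u = Some b /\ ~ T a /\ acts_on_T_like a b).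

Lemma shadowed_None {u} : shadowed None u -> u = None.
Proof. intros [_ [<-|[? [? [E _]]]]]; [reflexivity|discriminate]. Qed.

Lemma mul1_T {u} x : vert T u -> T (mul1 mul u (gen x)).
Proof. destruct u; simpl; auto. Qed.

Lemma shadowed_fwd {a u} x :
  shadowed a u -> shadowed (Some (mul1 mul a (gen x))) (Some (mul1 mul u (gen x))).
Proof.
  intros [Hu Hau]; split; [exact (mul1_T x Hu)|left].
  destruct Hau as [<-|[a' [b [-> [-> [_ Hab]]]]]]; [reflexivity|].
  simpl; rewrite Hab; auto.
Qed.

Lemma shadowed_bwd {a u' x} :
  shadowed (Some (mul1 mul a (gen x))) u' ->
  exists u, shadowed a u /\ u' = Some (mul1 mul u (gen x)).
Proof.
  intros [Hu' [<-|[c [b [Ec [-> [HnT Hcb]]]]]]].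
  - destruct a as [a|]; simpl in Hu' |- *.
    + destruct (classic (T a)) as [HTa|HnTa].
      * exists (Some a); split; [split; [exact HTa|left; reflexivity]|reflexivity].
      * destruct (acts_on_T_like_T (gen_T x) Hu') as [b [HTb Hab]].
        exists (Some b); split.
        -- split; [exact HTb|right; exists a, b; auto].
        -- rewrite Hab; auto.
    + exists None; split; [split; [exact Logic.I|left; reflexivity]|reflexivity].
  - (* [c = a (gen x)], and [c (gen x) = b (gen x)] lies in T, so [c] does too *)
    exfalso; apply HnT; injection Ec as <-.
    destruct a as [a|]; simpl; [|apply gen_T].
    apply (T_mul_right_unitary (gen_T x) (gen_T x)).
    rewrite Hcb; [exact (T_mul_closed Hu' (gen_T x))|apply gen_T].
Qed.

Lemma lpath_shadowed {v w v'} :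
  lpath mul (fun _ => True) gen v w v' -> forall u, shadowed v u ->
  exists u', shadowed v' u' /\ lpath mul T gen u w u'.
Proof.
  induction 1 as [v _|a x w v _ _ _ IH|a x w v _ _ _ IH]; intros u Hvu.
  - exists u; split; [exact Hvu|constructor; apply Hvu].
  - destruct (IH _ (shadowed_fwd x Hvu)) as [u' [Hu' Hp]].
    exists u'; split; [exact Hu'|].
    apply lp_fwd; [apply Hvu|apply mul1_T, Hvu|exact Hp].
  - destruct (shadowed_bwd Hvu) as [u0 [Hu0 ->]].
    destruct (IH _ Hu0) as [u' [Hu' Hp]].
    exists u'; split; [exact Hu'|].
    apply lp_bwd; [apply Hu0|apply mul1_T, Hu0|exact Hp].
Qed.

Theorem loop_problem_subsemigroup w :
  loop_problem mul T gen w <-> loop_problem mul (fun _ => True) gen w.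
Proof.
  split; intro H.
  - exact (lpath_mono (fun _ _ => Logic.I) H).
  - destruct (lpath_shadowed H None (conj Logic.I (or_introl eq_refl)))
      as [u [Hu Hp]].
    rewrite (shadowed_None Hu) in Hp; exact Hp.
Qed.

End SubsemigroupLoops.

Section Rees0.

Context {S I J : Type} (mulS : S -> S -> S) (P : J -> I -> option S)
  (i : I) (j : J).

Definition rees0_block (m : option (I * S * J)) : Prop :=
  exists s, m = Some (i, s, j).

Lemma rees0_block_mul_closed : P j i <> None ->
  forall a b, rees0_block a -> rees0_block b -> rees0_block (rees0_mul mulS P a b).
Proof.
  intros Pji a b [s ->] [t ->]; simpl.
  destruct (P j i); [eexists; reflexivity|congruence].
Qed.

Lemma rees0_block_right_unitary : forall a t t',
  rees0_block t -> rees0_block t' ->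
  rees0_block (rees0_mul mulS P (rees0_mul mulS P a t) t') ->
  rees0_block (rees0_mul mulS P a t).
Proof.
  intros [[[i1 g1] j1]|] t t' [s ->] [s' ->] [r Hr]; simpl in *; [|discriminate].
  destruct (P j1 i); simpl in Hr; [|discriminate].
  destruct (P j i); [|discriminate].
  injection Hr as -> _; eexists; reflexivity.
Qed.

Lemma rees0_acts_on_block_like_block :
  (forall j', P j' i = None \/
     exists p' p, P j' i = Some p' /\ P j i = Some p /\ left_mult_sub mulS p' p) ->
  forall a t, rees0_block t -> rees0_block (rees0_mul mulS P a t) ->
  exists b, rees0_block b /\ acts_on_T_like (rees0_mul mulS P) rees0_block a b.
Proof.
  intros HP [[[i1 g1] j1]|] t [s ->] [r Hr]; simpl in Hr; [|discriminate].
  destruct (HP j1) as [E|[p' [p [E [Ep Hpp']]]]]; rewrite E in Hr; [discriminate|].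
  injection Hr as -> _.
  destruct (Hpp' g1) as [g Hg].
  exists (Some (i, g, j)); split; [eexists; reflexivity|].
  intros t [s' ->]; simpl; rewrite E, Ep, Hg; reflexivity.
Qed.

End Rees0.

Section Rees.

Context {S I J : Type} (mulS : S -> S -> S) (P : J -> I -> S) (i : I) (j : J).

Definition rees_block (m : I * S * J) : Prop := exists s, m = (i, s, j).

Lemma rees_block_mul_closed :
  forall a b, rees_block a -> rees_block b -> rees_block (rees_mul mulS P a b).
Proof. intros a b [s ->] [t ->]; eexists; reflexivity. Qed.

Lemma rees_block_right_unitary : forall a t t',
  rees_block t -> rees_block t' ->
  rees_block (rees_mul mulS P (rees_mul mulS P a t) t') ->
  rees_block (rees_mul mulS P a t).
Proof.
  intros [[i1 g1] j1] t t' [s ->] [s' ->] [r Hr]; simpl in *.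
  injection Hr as -> _; eexists; reflexivity.
Qed.

Lemma rees_acts_on_block_like_block :
  (forall j', left_mult_sub mulS (P j' i) (P j i)) ->
  forall a t, rees_block t -> rees_block (rees_mul mulS P a t) ->
  exists b, rees_block b /\ acts_on_T_like (rees_mul mulS P) rees_block a b.
Proof.
  intros HP [[i1 g1] j1] t [s ->] [r Hr]; simpl in Hr.
  injection Hr as -> _.
  destruct (HP j1 g1) as [g Hg].
  exists (i, g, j); split; [eexists; reflexivity|].
  intros t [s' ->]; simpl; rewrite Hg; reflexivity.
Qed.

End Rees.

Theorem theorem5p2 :
  (* Case M = M^0(S; I, J; P) *)
  (forall (S I J : Type) (mulS : S -> S -> S) (P : J -> I -> option S)
     (i : I) (j : J) (X Y : Type) (iota : X -> Y) (tau : Y -> option (I * S * J)),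
     associative_op mulS ->
     finitely_generated (rees0_mul mulS P) ->
     P j i <> None ->
     (forall j' : J, P j' i = None \/
        exists p' p, P j' i = Some p' /\ P j i = Some p /\ left_mult_sub mulS p' p) ->
     (forall x1 x2 : X, iota x1 = iota x2 -> x1 = x2) ->
     generators_of (rees0_mul mulS P) (fun _ => True) tau ->
     generators_of (rees0_mul mulS P)
       (fun m => exists s : S, m = Some (i, s, j)) (fun x => tau (iota x)) ->
     forall w : list (hat X),
       loop_problem (rees0_mul mulS P)
         (fun m => exists s : S, m = Some (i, s, j)) (fun x => tau (iota x)) w
       <-> loop_problem (rees0_mul mulS P) (fun _ => True) tau (hat_map iota w))
  /\
  (* Case M = M(S; I, J; P) *)
  (forall (S I J : Type) (mulS : S -> S -> S) (P : J -> I -> S)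
     (i : I) (j : J) (X Y : Type) (iota : X -> Y) (tau : Y -> I * S * J),
     associative_op mulS ->
     finitely_generated (rees_mul mulS P) ->
     (forall j' : J, left_mult_sub mulS (P j' i) (P j i)) ->
     (forall x1 x2 : X, iota x1 = iota x2 -> x1 = x2) ->
     generators_of (rees_mul mulS P) (fun _ => True) tau ->
     generators_of (rees_mul mulS P)
       (fun m => exists s : S, m = (i, s, j)) (fun x => tau (iota x)) ->
     forall w : list (hat X),
       loop_problem (rees_mul mulS P)
         (fun m => exists s : S, m = (i, s, j)) (fun x => tau (iota x)) w
       <-> loop_problem (rees_mul mulS P) (fun _ => True) tau (hat_map iota w)).
Proof.
  split.
  - intros S I J mulS P i j X Y iota tau _ _ Pji HP _ _ [gen_T _] w.
    unfold loop_problem; rewrite lpath_hat_map.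
    apply (loop_problem_subsemigroup _ (rees0_block i j) _ gen_T).
    + apply rees0_block_mul_closed, Pji.
    + apply rees0_block_right_unitary.
    + apply rees0_acts_on_block_like_block, HP.
  - intros S I J mulS P i j X Y iota tau _ _ HP _ _ [gen_T _] w.
    unfold loop_problem; rewrite lpath_hat_map.
    apply (loop_problem_subsemigroup _ (rees_block i j) _ gen_T).
    + apply rees_block_mul_closed.
    + apply rees_block_right_unitary.
    + apply rees_acts_on_block_like_block, HP.
Qed.
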